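(* Let $L\subset\mathbb{R}$ be a Galois extension of $\mathbb{Q}$ with cyclic Galois group of order $4$ generated by $\sigma$, let $l$ be its unique quadratic subfield with fundamental unit $u_l>1$, and let $u_0\in\mathcal{O}_L^*$ with $u_0\ne\pm1$ and $N_{L/l}(u_0)=u_0\sigma^2(u_0)=\pm1$. Put $W_1=\log u_l$, $W_2=\log|u_0|$, $W_3=\log|\sigma(u_0)|$. For integers $n_1,n_2,n_3$ let $w=n_1\operatorname{LOG}(u_l)\wedge\operatorname{LOG}(u_0)+n_2\operatorname{LOG}(u_l)\wedge\operatorname{LOG}(\sigma(u_0))+n_3\operatorname{LOG}(u_0)\wedge\operatorname{LOG}(\sigma(u_0))$. Then (i) $\|w\|_1\ge 4|n_3|(W_2^2+W_3^2)$; and (ii) if $(n_1,n_2)\ne(0,0)$, then $\|w\|_1\ge 2W_1\big(2\max\{|W_2|,|W_3|\}+|W_2|+|W_3|\big)$.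
   Context: For a totally real number field $L$, $\operatorname{LOG}:\mathcal{O}_L^*\to\mathbb{R}^{\mathcal{A}_L}$, $\operatorname{LOG}(\gamma)=(\log|\tau(\gamma)|)_\tau$, indexed by the real embeddings $\tau$ of $L$. With the standard orthonormal basis $\{\delta^v\}$ of $\mathbb{R}^{\mathcal{A}_L}$ and $\delta^I=\delta^{v_1}\wedge\cdots\wedge\delta^{v_j}$ for $j$-subsets $I$, the 1-norm of $w=\sum_I c_I\delta^I\in\bigwedge^j\mathbb{R}^{\mathcal{A}_L}$ is $\|w\|_1=\sum_I|c_I|$. *)

From HB Require Import structures.
From mathcomp Require Import all_boot all_order all_algebra all_fingroup all_field.
From mathcomp Require Import all_classical all_reals all_analysis.
Set Implicit Arguments. Unset Strict Implicit. Unset Printing Implicit Defensive.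
Import Order.TTheory GRing.Theory Num.Theory.
Local Open Scope ring_scope.

Definition alg_integral (K : fieldType) (x : K) : Prop :=
  integralOver (fun z : int => z%:~R : K) x.

Definition int_unit (K : fieldType) (x : K) : Prop :=
  x != 0 /\ alg_integral x /\ alg_integral x^-1.

Definition fundamental_unit (L : fieldType) (l : pred L) (R : realType)
  (iota : L -> R) (u : L) : Prop :=
  [/\ u \in l, int_unit u, 1 < iota u &
      forall v, v \in l -> int_unit v -> exists k : int, v = u ^ k \/ v = - u ^ k].

(* LOG map, indexed by the real embeddings iota \o g, g in Gal(L/Q). *)
Definition LOG (R : realType) (L : splittingFieldType rat)
  (iota : {rmorphism L -> R}) (x : L) : gal_of (fullv : {vspace L}) -> R :=
  fun g => ln `|iota (g x)|.

(* Coefficients of x /\ y w.r.t. the basis delta^{a} /\ delta^{b} (a before b). *)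
Definition wedge2 (R : realType) (T : finType) (x y : T -> R) : T -> T -> R :=
  fun a b => x a * y b - x b * y a.

Definition norm1_2 (R : realType) (T : finType) (w : T -> T -> R) : R :=
  \sum_(a : T) \sum_(b : T | (enum_rank a < enum_rank b)%N) `|w a b|.

From Pilot Require Import Defs.
From HB Require Import structures.
From mathcomp Require Import all_boot all_order all_algebra all_fingroup all_field.
From mathcomp Require Import all_classical all_reals all_analysis.
From mathcomp Require Import all_solvable ring lra zify.
Set Implicit Arguments.
Unset Strict Implicit.
Unset Printing Implicit Defensive.
Import Order.TTheory GRing.Theory Num.Theory.
Local Open Scope ring_scope.

(* Along the cycle 1, sigma, sigma^2, sigma^3 of real embeddings, the relations
   N_{L/l}(u_l) = u_l sigma(u_l) = +-1 (a rational unit) and u_0 sigma^2(u_0) = +-1 make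
   LOG(u_l) = W1 (1, -1, 1, -1), LOG(u_0) = (W2, W3, -W2, -W3) and
   LOG(sigma u_0) = (W3, -W2, -W3, W2).  The six coefficients of w are then
   P - cS, -(P + cS), Q + cS, Q - cS, -2 W1 X and 2 W1 Y, where S = W2^2 + W3^2,
   X = n1 W2 + n2 W3, Y = n1 W3 - n2 W2, P = W1 (X + Y), Q = W1 (X - Y).  Pairing them
   with |p - q| + |p + q| = 2 max(|p|, |q|) gives both bounds, the second one because
   X + iY = (n1 - i n2)(W2 + i W3) is at least as long as W2 + i W3 in both the
   max-norm and the 1-norm. *)

Section NormPair.
Variable R : realDomainType.

Lemma ler_max_normBD (p q : R) : 2 * Num.max `|p| `|q| <= `|p - q| + `|p + q|.
Proof.
rewrite maxr_pMr // ge_max -normr_nat -!normrM; apply/andP; split.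
- have -> : 2%:R * p = (p - q) + (p + q) by ring.
  exact: ler_normD.
- have -> : 2%:R * q = (p + q) - (p - q) by ring.
  by rewrite [leRHS]addrC; apply: ler_normB.
Qed.

Implicit Types s t u v : R.

Lemma norm_pair_le_of_le s t u v : `|s| <= `|u| -> `|t| <= `|v| ->
  Num.max `|s| `|t| <= Num.max `|u| `|v| /\ `|s| + `|t| <= `|u| + `|v|.
Proof. by move=> su tv; split; [apply: le_max2 | apply: lerD]. Qed.

Lemma norm_pair_le_of_sqr s t u v : 2 * (s ^+ 2 + t ^+ 2) <= u ^+ 2 + v ^+ 2 ->
  Num.max `|s| `|t| <= Num.max `|u| `|v| /\ `|s| + `|t| <= `|u| + `|v|.
Proof.
rewrite -[s ^+ 2]real_normK ?num_real // -[t ^+ 2]real_normK ?num_real //.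
rewrite -[u ^+ 2]real_normK ?num_real // -[v ^+ 2]real_normK ?num_real //.
have := normr_ge0 s; have := normr_ge0 t; have := normr_ge0 u; have := normr_ge0 v.
move: `|s| `|t| `|u| `|v| => S T U V V0 U0 T0 S0 h.
have UM : U <= Num.max U V by rewrite le_max lexx.
have VM : V <= Num.max U V by rewrite le_max lexx orbT.
split; first by rewrite ge_max; apply/andP; split; nra.
have ST := sqr_ge0 (S - T); have UV := mulr_ge0 U0 V0.
have : (S + T) ^+ 2 <= (U + V) ^+ 2 by nra.
by rewrite ler_pXn2r ?nnegrE ?addr_ge0.
Qed.

Lemma norm_intr_ge1 (n : int) : n != 0 -> 1 <= `|n%:~R : R|.
Proof. by move=> n0; rewrite -intr_norm ler1z; lia. Qed.

(* X + iY = (n1 - i n2)(s + i t), and a nonzero Gaussian integer has norm at least 1. *)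
Lemma norm_pair_le_gauss (n1 n2 : int) (s t : R) : (n1, n2) != (0, 0) ->
  let X := n1%:~R * s + n2%:~R * t in let Y := n1%:~R * t - n2%:~R * s in
  Num.max `|s| `|t| <= Num.max `|X| `|Y| /\ `|s| + `|t| <= `|X| + `|Y|.
Proof.
move=> + X Y; rewrite {}/X {}/Y.
have [-> n12|n20 _] := eqVneq n2 0.
  have n10 : n1 != 0 by move: n12; apply: contraNneq => ->.
  rewrite !mul0r addr0 subr0.
  by apply: norm_pair_le_of_le; rewrite normrM ler_peMl ?norm_intr_ge1.
have [->|n10] := eqVneq n1 0.
  rewrite !mul0r add0r sub0r normrN maxC [`|s| + _]addrC.
  by apply: norm_pair_le_of_le; rewrite normrM ler_peMl ?norm_intr_ge1.
apply: norm_pair_le_of_sqr.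
have sqr_ge1 (n : int) : n != 0 -> 1 <= (n%:~R : R) ^+ 2.
  move=> n0; have := @norm_intr_ge1 n n0.
  by rewrite -[_ ^+ 2]real_normK ?num_real //; nra.
have n1_ge1 := sqr_ge1 _ n10; have n2_ge1 := sqr_ge1 _ n20.
have s_ge0 := sqr_ge0 s; have t_ge0 := sqr_ge0 t.
set a := n1%:~R in n1_ge1 *; set b := n2%:~R in n2_ge1 *; nra.
Qed.
End NormPair.

Definition wedge_comb {R : ringType} {T : Type} (a b c : R) (x y z : T -> R) (i j : T) : R :=
  a * (x i * y j - x j * y i) + b * (x i * z j - x j * z i) + c * (y i * z j - y j * z i).

Lemma wedge_comb_antisym (R : comRingType) (T : Type) (a b c : R) (x y z : T -> R) i j :
  wedge_comb a b c x y z j i = - wedge_comb a b c x y z i j.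
Proof. by rewrite /wedge_comb; ring. Qed.

(* x, y, z stand for LOG(u_l), LOG(u_0), LOG(sigma u_0) evaluated at sigma^i. *)
Section CyclicWedge.
Variables (R : realDomainType) (n1 n2 : int) (c : R) (x y z : nat -> R).
Hypotheses (x_alt : forall i, x i.+1 = - x i) (y_antiperiodic : forall i, y i.+2 = - y i)
  (z_shift : forall i, z i = y i.+1).

Let a : R := n1%:~R.
Let b : R := n2%:~R.
Let X := a * y 0 + b * y 1.
Let Y := a * y 1 - b * y 0.
Let S := y 0 ^+ 2 + y 1 ^+ 2.
Let pairsum := \sum_(0 <= i < 4) \sum_(i.+1 <= j < 4) `|wedge_comb a b c x y z i j|.

Lemma pairsum_wedge_cyclic4 :
  pairsum = (`|x 0 * (X + Y) - c * S| + `|x 0 * (X + Y) + c * S|)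
  + (`|x 0 * (X - Y) - c * S| + `|x 0 * (X - Y) + c * S|)
  + 2 * `|x 0| * (`|X| + `|Y|).
Proof.
have x1 : x 1 = - x 0 by rewrite x_alt.
have x2 : x 2 = x 0 by rewrite !x_alt opprK.
have x3 : x 3 = - x 0 by rewrite !x_alt opprK.
have y2 : y 2 = - y 0 by rewrite y_antiperiodic.
have y3 : y 3 = - y 1 by rewrite y_antiperiodic.
have y4 : y 4 = y 0 by rewrite !y_antiperiodic opprK.
pose w := wedge_comb a b c x y z.
have wE i j : w i j = a * (x i * y j - x j * y i) + b * (x i * y j.+1 - x j * y i.+1)
    + c * (y i * y j.+1 - y j * y i.+1) by rewrite /w /wedge_comb !z_shift.
have w01 : w 0 1 = x 0 * (X + Y) - c * S by rewrite wE x1 y2 /X /Y /S; ring.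
have w02 : w 0 2 = - (2 * x 0 * X) by rewrite wE x2 y2 y3 /X; ring.
have w03 : w 0 3 = x 0 * (X - Y) + c * S by rewrite wE x3 y3 y4 /X /Y /S; ring.
have w12 : w 1 2 = x 0 * (X - Y) - c * S by rewrite wE x1 x2 y2 y3 /X /Y /S; ring.
have w13 : w 1 3 = 2 * x 0 * Y by rewrite wE x1 x3 y2 y3 y4 /Y; ring.
have w23 : w 2 3 = - (x 0 * (X + Y) + c * S) by rewrite wE x2 x3 y2 y3 y4 /X /Y /S; ring.
rewrite /pairsum /index_iota /= !big_cons !big_nil -/w w01 w02 w03 w12 w13 w23 !normrN !normrM.
rewrite [`|2|]ger0_norm //; lra.
Qed.

Lemma pairsum_wedge_cyclic4_ge_c : 4 * `|c| * S <= pairsum.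
Proof.
rewrite pairsum_wedge_cyclic4.
have S0 : 0 <= S by rewrite /S addr_ge0 ?sqr_ge0.
have cS : `|c * S| = `|c| * S by rewrite normrM (ger0_norm S0).
have P_le := ler_max_normBD (x 0 * (X + Y)) (c * S).
have Q_le := ler_max_normBD (x 0 * (X - Y)) (c * S).
have cS_le_P : `|c * S| <= Num.max `|x 0 * (X + Y)| `|c * S| by rewrite le_max lexx orbT.
have cS_le_Q : `|c * S| <= Num.max `|x 0 * (X - Y)| `|c * S| by rewrite le_max lexx orbT.
have : 0 <= 2 * `|x 0| * (`|X| + `|Y|) by rewrite !mulr_ge0 ?addr_ge0.
lra.
Qed.

Lemma pairsum_wedge_cyclic4_ge_x : (n1, n2) != (0, 0) ->
  2 * `|x 0| * (2 * Num.max `|y 0| `|y 1| + `|y 0| + `|y 1|) <= pairsum.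
Proof.
move=> n12; rewrite pairsum_wedge_cyclic4.
have [le_max_XY le_sum_XY] : Num.max `|y 0| `|y 1| <= Num.max `|X| `|Y| /\
    `|y 0| + `|y 1| <= `|X| + `|Y| := norm_pair_le_gauss (y 0) (y 1) n12.
have max_XY := ler_max_normBD X Y.
have P_le : 2 * `|x 0 * (X + Y)| <= `|x 0 * (X + Y) - c * S| + `|x 0 * (X + Y) + c * S|.
  by apply: le_trans (ler_max_normBD _ _); rewrite ler_pM2l // le_max lexx.
have Q_le : 2 * `|x 0 * (X - Y)| <= `|x 0 * (X - Y) - c * S| + `|x 0 * (X - Y) + c * S|.
  by apply: le_trans (ler_max_normBD _ _); rewrite ler_pM2l // le_max lexx.
have : `|x 0| * (2 * Num.max `|y 0| `|y 1| + `|y 0| + `|y 1|)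
    <= `|x 0| * (`|X - Y| + `|X + Y| + `|X| + `|Y|).
  by rewrite ler_wpM2l //; lra.
rewrite !normrM in P_le Q_le; lra.
Qed.
End CyclicWedge.

Section Norm1_2.
Variables (R : realType) (T : finType) (w : T -> T -> R).
Hypothesis w_antisym : forall a b, w b a = - w a b.

Lemma norm1_2_sum_all : \sum_(a : T) \sum_(b : T) `|w a b| = 2 * norm1_2 w.
Proof.
have w_diag a : w a a = 0 by apply/eqP; rewrite -eqNr -w_antisym.
rewrite /norm1_2 mulr2n mulrDl mul1r.
transitivity (\sum_(a : T) (\sum_(b : T | (enum_rank a < enum_rank b)%N) `|w a b|
                + \sum_(b : T | (enum_rank b < enum_rank a)%N) `|w a b|)).
  apply: eq_bigr => a _.
  rewrite (bigID (fun b => (enum_rank a < enum_rank b)%N)) /=; congr (_ + _).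
  rewrite (bigID (fun b => (enum_rank b < enum_rank a)%N)) /= [X in _ + X]big1 ?addr0.
    by apply: eq_bigl => b; case: ltngtP.
  move=> b; rewrite -!leqNgt => /andP[ba ab].
  have /enum_rank_inj-> : enum_rank a = enum_rank b by apply/val_inj/eqP; rewrite eqn_leq ab.
  by rewrite w_diag normr0.
rewrite big_split /= (exchange_big_dep predT) //=; congr (_ + _).
by apply: eq_bigr => a _; apply: eq_bigr => b _; rewrite w_antisym normrN.
Qed.

Lemma norm1_2_ge_pairs4 (e : nat -> T) : uniq [seq e i | i <- iota 0 4] ->
  \sum_(0 <= i < 4) \sum_(i.+1 <= j < 4) `|w (e i) (e j)| <= norm1_2 w.
Proof.
move=> e_uniq.
have w_diag a : w a a = 0 by apply/eqP; rewrite -eqNr -w_antisym.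
have sub_le (F : T -> R) : (forall a, 0 <= F a) ->
    \sum_(a <- [seq e i | i <- iota 0 4]) F a <= \sum_(a : T) F a.
  move=> F0; rewrite big_uniq //= [leRHS](bigID (mem [seq e i | i <- iota 0 4])) /=.
  by rewrite lerDl sumr_ge0.
have : \sum_(a <- [seq e i | i <- iota 0 4]) \sum_(b <- [seq e i | i <- iota 0 4]) `|w a b|
    <= 2 * norm1_2 w.
  rewrite -norm1_2_sum_all; apply: le_trans (sub_le _ _); last by move=> a; apply: sumr_ge0.
  by apply: ler_sum => a _; apply: sub_le.
rewrite /index_iota /= !big_cons !big_nil !w_diag !normr0.
rewrite (w_antisym (e 1)) (w_antisym (e 2)) (w_antisym (e 3)) (w_antisym (e 2) (e 1)).
rewrite (w_antisym (e 3) (e 1)) (w_antisym (e 3) (e 2)) !normrN.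
lra.
Qed.
End Norm1_2.

Lemma alg_integral_rmorph (K K' : fieldType) (f : {rmorphism K -> K'}) (x : K) :
  Defs.alg_integral x -> Defs.alg_integral (f x).
Proof.
case=> p p_monic px0; exists p => //.
rewrite -(eq_map_poly (rmorph_int f)) map_poly_comp.
exact: rmorph_root.
Qed.

Lemma int_unit_rmorph (K K' : fieldType) (f : {rmorphism K -> K'}) (x : K) :
  int_unit x -> int_unit (f x).
Proof.
case=> x0 [xI xVI]; split; first by rewrite fmorph_eq0.
by split; rewrite -?fmorphV; apply: alg_integral_rmorph.
Qed.

Lemma int_unitM (K : fieldType) (x y : K) : int_unit x -> int_unit y -> int_unit (x * y).
Proof.
case=> x0 [xI xVI] [y0 [yI yVI]]; split; first by rewrite mulf_neq0.
by rewrite invfM; split; apply: integral_mul.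
Qed.

Lemma alg_integral_rat_int (L : fieldExtType rat) (r : rat) :
  Defs.alg_integral (r%:A : L) -> r \is a Num.int.
Proof.
case=> p p_monic pr0.
have rI : Defs.alg_integral r.
  exists p => //; rewrite -(fmorph_root (in_alg L)) -map_poly_comp.
  by rewrite (eq_map_poly (rmorph_int (in_alg L))).
have [q q_monic qr0] := alg_integral_rmorph (ratr : {rmorphism rat -> algC}) rI.
have : ratr r \in Aint.
  apply: (root_monic_Aint qr0); first exact: monic_map.
  by apply/polyOverP => i; rewrite coef_map rpred_int.
by move/(Cint_rat_Aint (Crat_rat r)); rewrite Cint_rat.
Qed.

Lemma rational_int_unit (L : fieldExtType rat) (x : L) :
  x \in 1%VS -> int_unit x -> x = 1 \/ x = -1.
Proof.
case/vlineP=> r -> [r0 [rI rVI]].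
have /intrP[m rm] := alg_integral_rat_int rI.
have /intrP[m' rm'] : r^-1 \is a Num.int.
  by apply: (@alg_integral_rat_int L); rewrite -[(r^-1)%:A]/(in_alg L r^-1) fmorphV.
have {}r0 : r != 0 by apply: contraNneq r0 => ->; rewrite scale0r.
have /intUnitRing.unitzPl : m' * m = 1.
  by apply: (@intr_inj rat); rewrite rmorphM /= -rm -rm' mulVf.
rewrite qualifE /= rm -[(_ : rat)%:A]/(in_alg L _) rmorph_int.
by case/orP=> /eqP->; [left|right]; rewrite ?rmorphN rmorph1.
Qed.


Section LOG.
Variables (R : realType) (L : splittingFieldType rat) (iota : {rmorphism L -> R}).

Lemma LOG_gal (s t : gal_of (fullv : {vspace L})) (x : L) :
  LOG iota (s x) t = LOG iota x (s * t)%g.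
Proof. by rewrite /LOG galM ?memvf. Qed.

Lemma LOG_pm1 (x y : L) g : x * y = 1 \/ x * y = -1 -> LOG iota y g = - LOG iota x g.
Proof.
move=> xy1; rewrite /LOG.
have prod1 : `|iota (g x)| * `|iota (g y)| = 1.
  by rewrite -normrM -!rmorphM; case: xy1 => ->; rewrite ?rmorphN !rmorph1 ?normrN normr1.
have : iota (g x) * iota (g y) != 0 by rewrite -normr_eq0 normrM prod1 oner_eq0.
rewrite mulf_eq0 negb_or -!normr_gt0 => /andP[gx0 gy0].
by apply/eqP; rewrite -addr_eq0 addrC -lnM // prod1 ln1.
Qed.
End LOG.

Section CyclicQuartic.
Variables (L : splittingFieldType rat) (sigma : gal_of (fullv : {vspace L})).
Hypotheses (galL : galois 1%VS (fullv : {vspace L}))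
  (Gal_cycle : ('Gal(fullv / 1%VS) = <[sigma]>)%g) (sigma_order : #[sigma]%g = 4%N).

Lemma sigma_fixed_rational (x : L) : sigma x = x -> x \in 1%VS.
Proof.
move=> sx; have /galois_fixedField <- := galL.
apply/fixedFieldP; first exact: memvf.
move=> g; rewrite Gal_cycle => /cycleP[i ->].
by elim: i => [|i IHi]; rewrite ?expg0 ?gal_id // expgS galM ?memvf // sx.
Qed.

Lemma sigma2_fixes_quadratic (l : {subfield L}) (a : L) :
  \dim l = 2%N -> a \in l -> (sigma ^+ 2)%g a = a.
Proof.
move=> dim_l al.
have dimL : \dim (fullv : {vspace L}) = 4%N.
  by have := galois_dim galL; rewrite Gal_cycle -sigma_order dimv1 divn1.
have gal_l : galois l fullv by apply: galoisS galL; rewrite sub1v subvf.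
have card_l : #|'Gal(fullv / l)%g| = 2%N by rewrite -galois_dim // dimL dim_l.
have sub_l : ('Gal(fullv / l) \subset <[sigma]>)%g by rewrite -Gal_cycle galS ?sub1v.
have : 'Gal(fullv / l)%G \in [set H : {group _} | H \subset <[sigma]> & #|H| == 2]%g.
  by rewrite inE sub_l card_l eqxx.
rewrite cycle_sub_group ?sigma_order // inE => /eqP/(congr1 val) /= Gal_l.
by apply: (fixed_gal (subvf l)) => //; rewrite Gal_l; apply: cycle_id.
Qed.

Lemma norm_quadratic_unit (l : {subfield L}) (u : L) :
  \dim l = 2%N -> u \in l -> int_unit u -> u * sigma u = 1 \/ u * sigma u = -1.
Proof.
move=> dim_l ul uU; apply: rational_int_unit.
  apply: sigma_fixed_rational.
  rewrite rmorphM /= -galM ?memvf // -expg2 (sigma2_fixes_quadratic dim_l ul).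
  exact: mulrC.
by apply: int_unitM => //; apply: int_unit_rmorph.
Qed.
End CyclicQuartic.

Theorem mainTheorem8 (R : realType) (L : splittingFieldType rat)
  (iota : {rmorphism L -> R})
  (sigma : gal_of (fullv : {vspace L}))
  (l : {subfield L}) (ul u0 : L) (n1 n2 n3 : int) :
  galois 1%VS (fullv : {vspace L}) ->
  ('Gal(fullv / 1%VS) = <[sigma]>)%g ->
  #[sigma]%g = 4%N ->
  \dim l = 2%N ->
  fundamental_unit (mem l) iota ul ->
  int_unit u0 -> u0 != 1 -> u0 != -1 ->
  (u0 * (sigma ^+ 2)%g u0 = 1 \/ u0 * (sigma ^+ 2)%g u0 = -1) ->
  let W1 := ln (iota ul) in
  let W2 := ln `|iota u0| in
  let W3 := ln `|iota (sigma u0)| in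
  let w := fun a b =>
      n1%:~R * wedge2 (LOG iota ul) (LOG iota u0) a b
    + n2%:~R * wedge2 (LOG iota ul) (LOG iota (sigma u0)) a b
    + n3%:~R * wedge2 (LOG iota u0) (LOG iota (sigma u0)) a b in
  4 * `|n3%:~R| * (W2 ^+ 2 + W3 ^+ 2) <= norm1_2 w /\
  ((n1, n2) != (0, 0) ->
     2 * W1 * (2 * Num.max `|W2| `|W3| + `|W2| + `|W3|) <= norm1_2 w).
Proof.
move=> galL Gal_cycle sigma_order dim_l [ul_l ul_unit ul_gt1 _] _ _ _ u0_norm W1 W2 W3 w.
pose x i := LOG iota ul (sigma ^+ i)%g.
pose y i := LOG iota u0 (sigma ^+ i)%g.
pose z i := LOG iota (sigma u0) (sigma ^+ i)%g.
have ul_norm := norm_quadratic_unit galL Gal_cycle sigma_order dim_l ul_l ul_unit.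
have x_alt i : x i.+1 = - x i by rewrite /x expgS -LOG_gal; apply: LOG_pm1.
have y_antiperiodic i : y i.+2 = - y i.
  by rewrite /y -[i.+2]/(2 + i)%N expgD -LOG_gal; apply: LOG_pm1.
have z_shift i : z i = y i.+1 by rewrite /z LOG_gal -expgS.
have sigma_uniq : uniq [seq (sigma ^+ i)%g | i <- seq.iota 0 4].
  by rewrite /= !inE !eq_expg_mod_order sigma_order.
have norm_ge := norm1_2_ge_pairs4 (wedge_comb_antisym n1%:~R n2%:~R n3%:~R
  (LOG iota ul) (LOG iota u0) (LOG iota (sigma u0))) sigma_uniq.
have W1E : x 0%N = W1 by rewrite /x /LOG expg0 gal_id ger0_norm // ltW // (lt_trans ltr01).
have W2E : y 0%N = W2 by rewrite /y /LOG expg0 gal_id.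
have W3E : y 1%N = W3 by rewrite /y /LOG expg1.
rewrite -W1E -W2E -W3E; split.
  exact: le_trans (pairsum_wedge_cyclic4_ge_c n1 n2 n3%:~R x_alt y_antiperiodic z_shift) norm_ge.
move=> n12; rewrite -[x 0%N]gtr0_norm; last by rewrite W1E ln_gt0.
exact: le_trans (pairsum_wedge_cyclic4_ge_x n3%:~R x_alt y_antiperiodic z_shift n12) norm_ge.
Qed.
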